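(* Let $r,k\geq 2$ and let $n\geq r+1$ be an integer with $n\nrightarrow(r+1)_k^r$. If a hypergraph $(V,E)$ admits a vertex colouring $V\to\{0,\dots,n-1\}$ under which no hyperedge of size $\geq r+1$ is monochromatic, then there is a colouring of the $r$-subsets of $V$ with $k+f(r)$ colours such that no hyperedge of size $\geq r+1$ is monochromatic (i.e. has all its $r$-subsets of the same colour), where $f(2)=1$, $f(3)=3$, $f(r)=4$ if $r\geq4$ and $r+1$ is prime, and $f(r)=5$ otherwise.
   Context: For $m\in\mathbb N$ write $[m]=\{0,\dots,m-1\}$. The relation $n\to(s)_k^r$ (for $n\geq s>r$, $k\geq2$) means that every colouring of the $r$-element subsets of $[n]$ with $k$ colours has a subset of $[n]$ of size $s$ all of whose $r$-subsets receive the same colour; $n\nrightarrow(s)_k^r$ is its negation. A vertex colouring makes a hyperedge monochromatic if all its vertices get the same colour. *)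

From mathcomp Require Import all_boot.
Set Implicit Arguments. Unset Strict Implicit. Unset Printing Implicit Defensive.

(* A colouring of the r-subsets of [n] with k colours is a map
   {set 'I_n} -> 'I_k (its values on sets of size <> r are irrelevant).
   n -> (s)^r_k : every such colouring has a set S of size s all of whose
   r-subsets get the same colour. *)
Definition ramsey_arrow (n s k r : nat) : Prop :=
  forall c : {set 'I_n} -> 'I_k,
    exists S : {set 'I_n},
      #|S| = s /\
      (forall A B : {set 'I_n}, A \subset S -> B \subset S ->
         #|A| = r -> #|B| = r -> c A = c B).

Definition has_size (V : Type) (m : nat) (X : V -> Prop) : Prop :=
  exists f : 'I_m -> V, injective f /\ (forall x, X x <-> exists i, f i = x).

Definition has_size_ge (V : Type) (m : nat) (X : V -> Prop) : Prop :=
  exists f : 'I_m -> V, injective f /\ (forall i, X (f i)).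

Definition subset_of (V : Type) (A B : V -> Prop) : Prop := forall x, A x -> B x.

Definition vmono (V C : Type) (col : V -> C) (e : V -> Prop) : Prop :=
  forall x y, e x -> e y -> col x = col y.

Definition rmono (V C : Type) (r : nat) (c : (V -> Prop) -> C) (e : V -> Prop) : Prop :=
  forall A B, subset_of A e -> subset_of B e -> has_size r A -> has_size r B -> c A = c B.

Definition fextra (r : nat) : nat :=
  if r == 2 then 1 else if r == 3 then 3 else if prime r.+1 then 4 else 5.

From mathcomp Require Import all_boot boolp zify.
Set Implicit Arguments. Unset Strict Implicit. Unset Printing Implicit Defensive.

(* Proof of Theorem 4.3.  Fix a colouring c0 of the r-subsets of [n] with k
   colours having no monochromatic (r+1)-set (it exists since n -/-> (r+1)^r_k)
   and a vertex colouring col : V -> [n] without monochromatic big hyperedges.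
   An r-set A of vertices, enumerated by f : [r] -> V, is coloured through the
   tuple h = col o f of its vertex colours only:
   - if its palette (set of colours) has r elements, it gets the colour
     c0 (palette) among the first k colours;
   - otherwise it gets one of fextra r extra colours, a code recording the
     parities of the palette size and of the multiplicity of a canonical
     palette colour (for r = 3 only three codes exist, so odd sizes share one).
   A big hyperedge that is not vertex-monochromatic contains r+1 vertices whose
   colours are not all equal; among its r-subsets obtained by dropping one of
   these vertices, two get different colours: in the rainbow case by the choice
   of c0, otherwise by a parity argument on palette sizes or multiplicities. *)

Section Palette.
Variable n : nat.

Definition palette m (h : 'I_m -> 'I_n) : {set 'I_n} := [set h i | i : 'I_m].
Definition mult m (h : 'I_m -> 'I_n) (a : 'I_n) : nat := \sum_(i < m) (h i == a).
Definition lead_mult m (h : 'I_m -> 'I_n) : nat :=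
  if [pick a in palette h] is Some a then mult h a else 0.

Lemma palette_perm m (h : 'I_m -> 'I_n) (s : 'I_m -> 'I_m) :
  injective s -> palette (h \o s) = palette h.
Proof.
move=> /injF_bij [s' _ ss']; apply/setP => a; apply/imsetP/imsetP => [[i _ ->]|[i _ ->]].
  by exists (s i).
by exists (s' i) => //=; rewrite ss'.
Qed.

Lemma mult_perm m (h : 'I_m -> 'I_n) (s : 'I_m -> 'I_m) a :
  injective s -> mult (h \o s) a = mult h a.
Proof. by move=> inj_s; rewrite /mult [RHS](reindex_inj inj_s). Qed.

Lemma lead_mult_perm m (h : 'I_m -> 'I_n) (s : 'I_m -> 'I_m) :
  injective s -> lead_mult (h \o s) = lead_mult h.
Proof.
by move=> inj_s; rewrite /lead_mult palette_perm //; case: pickP => // a _; rewrite mult_perm.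
Qed.

Lemma palette_lift m (h : 'I_m.+1 -> 'I_n) j : palette h = h j |: palette (h \o lift j).
Proof.
apply/setP => a; rewrite !inE; apply/imsetP/orP => [[i _ ->]|[/eqP ->|/imsetP [i _ ->]]].
- case: (unliftP j i) => [i' ->|->]; last by left.
  by right; apply/imsetP; exists i'.
- by exists j.
- by exists (lift j i).
Qed.

Lemma mult_lift m (h : 'I_m.+1 -> 'I_n) j a :
  mult h a = (h j == a) + mult (h \o lift j) a.
Proof. by rewrite /mult (bigD1_ord j). Qed.

Lemma mem_palette_lift m (h : 'I_m.+1 -> 'I_n) j :
  reflect (exists2 i, i != j & h i = h j) (h j \in palette (h \o lift j)).
Proof.
apply: (iffP imsetP) => [[i _ eq_h]|[i neq_ij eq_h]].
  by exists (lift j i); rewrite 1?eq_sym ?neq_lift.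
by move: neq_ij eq_h; rewrite eq_sym => /unlift_some [i' -> _] <-; exists i'.
Qed.
End Palette.

Lemma palette_card_ge2 n m (h : 'I_m -> 'I_n) i1 i2 : h i1 != h i2 -> 2 <= #|palette h|.
Proof.
move=> neq_h; have := cards2 (h i1) (h i2); rewrite neq_h => <-.
by apply: subset_leq_card; apply/subsetP => a; rewrite !inE => /orP [] /eqP ->; apply: imset_f.
Qed.

Lemma palette_card_le n m (h : 'I_m -> 'I_n) : #|palette h| <= m.
Proof. by rewrite (leq_trans (leq_imset_card _ _)) ?card_ord. Qed.

Lemma palette_card_repeated n m (h : 'I_m -> 'I_n) :
  (forall j, exists2 i, i != j & h i = h j) -> 2 * #|palette h| <= m.
Proof.
move=> repeated; rewrite -[X in _ <= X]card_ord -[#|'I_m|]sum1_card.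
rewrite (partition_big h (fun a => a \in palette h)) /= => [|i _]; last exact: imset_f.
rewrite mulnC -sum_nat_const; apply: leq_sum => a /imsetP [j _ ->].
have [i neq_ij eq_h] := repeated j.
by rewrite (bigD1 j) //= (bigD1 i) /= ?eq_h ?eqxx ?neq_ij // addnA leq_addr.
Qed.

Lemma palette_card_rainbow n m (h : 'I_m -> 'I_n) :
  (forall j i, i != j -> h i != h j) -> #|palette h| = m.
Proof.
by move=> rainbow; rewrite card_imset ?card_ord // => i j; apply: contra_eq; apply: rainbow.
Qed.

Lemma sub_setD1 (T : finType) (S A : {set T}) m :
  A \subset S -> #|S| = m.+1 -> #|A| = m -> exists2 a, a \in S & A = S :\ a.
Proof.
move=> sAS cS cA.
have [/eqP|[a]] := set_0Vmem (S :\: A).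
  by rewrite setD_eq0 => /subset_leq_card; rewrite cS cA ltnn.
rewrite inE => /andP [aA aS]; exists a => //.
have cSa : #|S :\ a| = m by move: (cardsD1 a S); rewrite aS cS add1n => -[].
apply/eqP; rewrite eqEcard cSa cA leqnn andbT.
by apply/subsetP => x xA; rewrite !inE (subsetP sAS) // andbT; apply: contraNneq aA => <-.
Qed.

Lemma fextra_gt0 r : 0 < fextra r.
Proof. by rewrite /fextra; do 3?case: ifP. Qed.

Section Code.
Variable r : nat.

(* For
   r >= 4 all four parity patterns fit in fextra r colours; for r = 3 odd t is
   collapsed to a single code. *)
Definition code (t m : nat) : nat :=
  if (r == 3) && odd t then 2 else 2 * odd t + odd m.

Definition code_ord (t m : nat) : 'I_(fextra r) :=
  Ordinal (ltn_pmod (code t m) (fextra_gt0 r)).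

Lemma code_small t m : 3 <= r -> code t m < fextra r.
Proof.
move=> r_ge3; rewrite /code /fextra; case: eqP => [->|r_neq3] /=.
  by case: (odd t); case: (odd m).
have -> : (r == 2) = false by apply/eqP; lia.
by case: ifP; case: (odd t); case: (odd m).
Qed.

Lemma code_ordE t m : 3 <= r -> code_ord t m = code t m :> nat.
Proof. by move=> r_ge3; rewrite /= modn_small ?code_small. Qed.

Lemma code_palette_neq t m1 m2 : code t.+1 m1 != code t m2.
Proof. by rewrite /code oddS; case: (r == 3); case: (odd t); case: (odd m1); case: (odd m2). Qed.

Lemma code_mult_neq t m : ~~ ((r == 3) && odd t) -> code t m.+1 != code t m.
Proof. by rewrite /code oddS => /negbTE ->; case: (odd t); case: (odd m). Qed.
End Code.

Definition no_mono_set n s r k (c : {set 'I_n} -> 'I_k) : Prop :=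
  forall S : {set 'I_n}, #|S| = s -> exists A B : {set 'I_n},
     [/\ A \subset S, B \subset S, #|A| = r, #|B| = r & c A <> c B].

Lemma not_arrow_colouring n s k r :
  ~ ramsey_arrow n s k r -> exists c : {set 'I_n} -> 'I_k, no_mono_set s r c.
Proof.
move=> /existsNP [c no_S]; exists c => S card_S.
apply/not_existsP => no_AB; apply: no_S; exists S; split=> // A B sA sB cA cB.
by apply/not_notP => neq_AB; apply: (no_AB A); exists B.
Qed.

Section SubsetColouring.
Variables (r k n : nat) (c0 : {set 'I_n} -> 'I_k).

Definition tuple_colour (h : 'I_r -> 'I_n) : 'I_(k + fextra r) :=
  if #|palette h| == r then lshift (fextra r) (c0 (palette h))
  else rshift k (code_ord r #|palette h| (lead_mult h)).

Lemma tuple_colour_perm (h : 'I_r -> 'I_n) (s : 'I_r -> 'I_r) :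
  injective s -> tuple_colour (h \o s) = tuple_colour h.
Proof. by move=> inj_s; rewrite /tuple_colour palette_perm ?lead_mult_perm. Qed.

Lemma tuple_colour_rainbow_neq (h1 h2 : 'I_r -> 'I_n) :
  #|palette h1| = r -> #|palette h2| != r -> tuple_colour h1 != tuple_colour h2.
Proof.
move=> pal1 pal2; rewrite /tuple_colour pal1 eqxx (negbTE pal2).
by apply/eqP => /(congr1 val) /= eq_val; move: (ltn_ord (c0 (palette h1))); lia.
Qed.

Lemma tuple_colour_code_neq (h1 h2 : 'I_r -> 'I_n) : 3 <= r ->
  #|palette h1| != r -> #|palette h2| != r ->
  code r #|palette h1| (lead_mult h1) != code r #|palette h2| (lead_mult h2) ->
  tuple_colour h1 != tuple_colour h2.
Proof.
move=> r_ge3 pal1 pal2; rewrite /tuple_colour (negbTE pal1) (negbTE pal2) -!code_ordE //.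
by apply: contra => /eqP /rshift_inj ->.
Qed.

Section Children.
Hypothesis r_ge2 : 2 <= r.
Variables (h : 'I_r.+1 -> 'I_n) (i1 i2 : 'I_r.+1).
Hypothesis h_nonconst : h i1 != h i2.

Local Notation child j := (h \o lift j).

Lemma palette_child_repeated j :
  (exists2 i, i != j & h i = h j) -> palette (child j) = palette h.
Proof.
move=> /mem_palette_lift h_in; rewrite [RHS](palette_lift h j).
by apply/esym/setUidPr; rewrite sub1set.
Qed.

Lemma palette_child_unique j :
  (forall i, i != j -> h i != h j) -> palette (child j) = palette h :\ h j.
Proof.
move=> uniq_j; rewrite (palette_lift h j) setU1K //.
by apply/mem_palette_lift => -[i /uniq_j /eqP].
Qed.

(* If some colour is repeated and some is unique, the palette sizes of the
   two corresponding children differ by one: if the larger is r the colours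
   lie in different blocks, otherwise the codes differ. *)
Lemma children_mixed j1 j2 : (exists2 i, i != j1 & h i = h j1) ->
  (forall i, i != j2 -> h i != h j2) -> tuple_colour (child j1) != tuple_colour (child j2).
Proof.
move=> rep1 uniq2; have pal1 := palette_child_repeated rep1.
have pal2 := palette_child_unique uniq2.
have card2 : #|palette (child j2)| = #|palette h|.-1.
  by rewrite pal2 (cardsD1 (h j2) (palette h)) imset_f.
have t_ge2 := palette_card_ge2 h_nonconst.
have t_le : #|palette h| <= r by rewrite -pal1 palette_card_le.
have [t_eq|t_neq] := eqVneq #|palette h| r.
  by apply: tuple_colour_rainbow_neq; rewrite ?pal1 ?card2 // t_eq; apply/eqP; lia.
have [s t_eq] : exists s, #|palette h| = s.+1 by exists #|palette h|.-1; lia.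
apply: tuple_colour_code_neq; rewrite ?pal1 ?card2 ?t_eq ?code_palette_neq //; lia.
Qed.

(* If every colour is repeated, all children share the palette (of size at
   most (r+1)/2 < r), and dropping an entry of the canonical colour or one of
   another colour changes the parity of its multiplicity. *)
Lemma children_repeated : (forall j, exists2 i, i != j & h i = h j) ->
  exists j1 j2, tuple_colour (child j1) != tuple_colour (child j2).
Proof.
move=> rep; have palette_all j : palette (child j) = palette h.
  exact: palette_child_repeated.
have t_ge2 := palette_card_ge2 h_nonconst.
have t_small := palette_card_repeated rep.
have r_ge3 : 3 <= r by lia.
have t_neq : #|palette h| != r by apply/eqP; lia.
have [a pick_a] : exists a, [pick b in palette h] = Some a.
  by case: pickP => [a _|/eq_card0]; [exists a|lia].
have lead_mult_child j : lead_mult (child j : 'I_r -> 'I_n) = mult h a - (h j == a).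
  by rewrite /lead_mult palette_all pick_a (mult_lift h j a) addKn.
have a_in : a \in palette h by move: pick_a; case: pickP => // b b_in [<-].
have [ja _ h_ja] := imsetP a_in.
have [jb h_jb] : exists jb, h jb != a.
  by case: (eqVneq (h i1) a) => [<-|]; [exists i2; rewrite eq_sym|exists i1].
have mult_pos : 0 < mult h a by rewrite (mult_lift h ja) -h_ja eqxx.
exists jb, ja; apply: (tuple_colour_code_neq r_ge3); rewrite ?palette_all; [exact: t_neq..|].
rewrite !lead_mult_child -h_ja eqxx (negbTE h_jb) subn0.
rewrite -[mult h a](prednK mult_pos) subn1 /=; apply: code_mult_neq.
by apply/negP => /andP [/eqP r_eq3]; have -> : #|palette h| = 2 by lia.
Qed.

(* If h is rainbow, its palette is an (r+1)-set; its children have as palettes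
   all its r-subsets, two of which c0 distinguishes. *)
Lemma children_rainbow : (forall j i, i != j -> h i != h j) -> no_mono_set r.+1 r c0 ->
  exists j1 j2, tuple_colour (child j1) != tuple_colour (child j2).
Proof.
move=> rainbow c0_good; have t_eq := palette_card_rainbow rainbow.
have [A [B [sA sB cA cB neq_AB]]] := c0_good _ t_eq.
have [_ /imsetP [ja _ ->] eA] := sub_setD1 sA t_eq cA.
have [_ /imsetP [jb _ ->] eB] := sub_setD1 sB t_eq cB.
have palette_child j : palette (child j) = palette h :\ h j.
  by apply: palette_child_unique => i; apply: rainbow.
have card_child j : #|palette (child j)| = r.
  by move: (cardsD1 (h j) (palette h)); rewrite t_eq imset_f // add1n palette_child => -[].
exists ja, jb; rewrite /tuple_colour !card_child eqxx !palette_child -eA -eB.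
by apply/eqP => /lshift_inj.
Qed.

Lemma children_distinguish : no_mono_set r.+1 r c0 ->
  exists j1 j2, tuple_colour (child j1) != tuple_colour (child j2).
Proof.
move=> c0_good.
have [rep|/existsNP [j2 not_rep_j2]] := pselect (forall j, exists2 i, i != j & h i = h j).
  exact: children_repeated.
have unique_j2 i : i != j2 -> h i != h j2.
  by move=> neq_i; apply/eqP => eq_h; apply: not_rep_j2; exists i.
have [[j1 rep1]|no_rep] := pselect (exists j, exists2 i, i != j & h i = h j).
  by exists j1, j2; apply: children_mixed.
apply: children_rainbow c0_good => j i neq_ij; apply/eqP => eq_h.
by apply: no_rep; exists j, i.
Qed.
End Children.
End SubsetColouring.

Lemma nonmono_enum (V : Type) n m (col : V -> 'I_n) (e : V -> Prop) :
  0 < m -> has_size_ge m.+1 e -> ~ vmono col e ->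
  exists g : 'I_m.+1 -> V,
    [/\ injective g, forall i, e (g i) & exists i1 i2, col (g i1) != col (g i2)].
Proof.
move=> m_gt0 [f [inj_f f_e]].
move=> /existsNP [x /existsNP [y /not_implyP [ex /not_implyP [ey /eqP neq_xy]]]].
have [[i neq_i]|all_eq] := pselect (exists i, col (f i) != col (f ord0)).
  by exists f; split=> //; exists i, ord0.
have f_col i : col (f i) = col (f ord0).
  by case: (eqVneq (col (f i)) (col (f ord0))) => // neq; case: all_eq; exists i.
have [z ez neq_z] : exists2 z, e z & col z != col (f ord0).
  by case: (eqVneq (col x) (col (f ord0))) => [eq_x|]; [exists y; rewrite // -eq_x eq_sym|exists x].
have f_neq_z i : f i <> z by move=> eq_fz; move: neq_z; rewrite -eq_fz f_col eqxx.
pose g i := if i == ord_max then z else f i.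
have max_neq0 : (ord_max : 'I_m.+1) != ord0 by rewrite -val_eqE /=; lia.
exists g; split.
- move=> i j; rewrite /g; case: eqP => [->|_]; case: eqP => [->|_] //.
  + by move=> eq_z; case: (f_neq_z j).
  + by move=> eq_z; case: (f_neq_z i).
  + exact: inj_f.
- by move=> i; rewrite /g; case: eqP.
- exists ord_max, ord0; rewrite /g eqxx; case: ifP => // /eqP eq0.
  by move: max_neq0; rewrite eq0 eqxx.
Qed.

Section HypergraphColouring.
Variables (r k n : nat) (V : Type) (col : V -> 'I_n) (c0 : {set 'I_n} -> 'I_k).

(* The colouring of r-sets of vertices: colour any enumeration (the value on
   sets that are not r-sets is irrelevant). *)
Definition rset_colour (A : V -> Prop) : 'I_(k + fextra r) :=
  match pselect (has_size r A) with
  | left enumA => tuple_colour c0 (col \o proj1_sig (cid enumA))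
  | right _ => rshift k (code_ord r 0 0)
  end.

Lemma rset_colour_enum (A : V -> Prop) (f : 'I_r -> V) :
  injective f -> (forall x, A x <-> exists i, f i = x) ->
  rset_colour A = tuple_colour c0 (col \o f).
Proof.
move=> inj_f enum_f; rewrite /rset_colour; case: pselect => [enumA|]; last by case; exists f.
case: (cid enumA) => f' [inj_f' enum_f'] /=.
have /all_sig [s f_s] : forall i, {j | f j = f' i}.
  by move=> i; apply: cid; apply/enum_f/enum_f'; exists i.
have inj_s : injective s by move=> i j eq_s; apply: inj_f'; rewrite -!f_s eq_s.
have -> : col \o f' = (col \o f) \o s by apply: funext => i /=; rewrite f_s.
exact: tuple_colour_perm.
Qed.

Lemma rset_colour_not_rmono (e : V -> Prop) (g : 'I_r.+1 -> V) :
  2 <= r -> no_mono_set r.+1 r c0 -> injective g -> (forall i, e (g i)) ->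
  (exists i1 i2, col (g i1) != col (g i2)) -> ~ rmono r rset_colour e.
Proof.
move=> r_ge2 c0_good inj_g g_e [i1 [i2 neq_col]] mono_e.
pose child j : V -> Prop := fun x => exists i, g (lift j i) = x.
have child_e j : subset_of (child j) e by move=> x [i <-].
have enum_child j : injective (g \o lift j) by move=> a b /inj_g /lift_inj.
have rset_colour_child j : rset_colour (child j) = tuple_colour c0 ((col \o g) \o lift j).
  by apply: (rset_colour_enum (f := g \o lift j)).
have [j1 [j2 /eqP neq_j]] := children_distinguish (h := col \o g) r_ge2 neq_col c0_good.
apply: neq_j; rewrite -!rset_colour_child; apply: mono_e => //.
- by exists (g \o lift j1).
- by exists (g \o lift j2).
Qed.
End HypergraphColouring.

Theorem theorem4p3 (r k n : nat) (V : Type) (E : (V -> Prop) -> Prop) :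
  2 <= r -> 2 <= k -> r.+1 <= n -> ~ ramsey_arrow n r.+1 k r ->
  (exists col : V -> 'I_n,
      forall e, E e -> has_size_ge r.+1 e -> ~ vmono col e) ->
  exists c : (V -> Prop) -> 'I_(k + fextra r),
    forall e, E e -> has_size_ge r.+1 e -> ~ rmono r c e.
Proof.
move=> r_ge2 _ _ /not_arrow_colouring [c0 c0_good] [col col_good].
exists (rset_colour r col c0) => e Ee big_e.
have [g [inj_g g_e nonconst]] := nonmono_enum (ltnW r_ge2) big_e (col_good e Ee big_e).
exact: rset_colour_not_rmono r_ge2 c0_good inj_g g_e nonconst.
Qed.
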